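(* For every $\lambda$-calculus value $V$ and variable $x$, writing $I=\lambda z.z$: $\mathcal V'[\![I(xV)]\!]\not\cong_\pi \mathcal V'[\![xV]\!]$ and $\mathcal V[\![I(xV)]\!]\not\cong_\pi\mathcal V[\![xV]\!]$, where $\mathcal V,\mathcal V'$ are Milner's two call-by-value encodings into the $\pi$-calculus and $\cong_\pi$ is barbed congruence in the $\pi$-calculus.
   Context: $\lambda$-terms (possibly open): $M::=x\mid\lambda x.M\mid MM$; values $V::=x\mid\lambda x.M$. $\pi$-calculus: polyadic, well-sorted, with processes $P ::= 0\mid a(\tilde b).P\mid\overline a\langle\tilde b\rangle.P\mid(\nu a)P\mid P|P\mid\ !a(\tilde b).P\mid F\langle\tilde a\rangle$ and abstractions $F::=(\tilde a)P\mid K$ (constants $K\triangleq(\tilde x)P$, $P$ name-closed); $\overline a(y).P$ abbreviates $(\nu y)\overline a\langle y\rangle.P$. Standard operational semantics; $P\Longrightarrow P'$ is a sequence of internal steps, $P\Downarrow_a$ means $P\Longrightarrow P'$ with $P'$ able to perform an output with subject $a$. Barbed bisimilarity $\dot\approx$ is the largest symmetric relation such that $P\dot\approx Q$ implies: $P\Longrightarrow P'$ implies $Q\Longrightarrow Q'$ with $P'\dot\approx Q'$, and $P\Downarrow_a$ iff $Q\Downarrow_a$. Agents $A,B$ are barbed congruent, $A\cong_\pi B$, if $C[A]\dot\approx C[B]$ for all well-sorted $\pi$-contexts $C$. Encodings ($\lambda$-variables are names). $\mathcal V$: $\mathcal V[\![\lambda x.M]\!]=(p)\,\overline p(y).\,!y(x,q).\mathcal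 V[\![M]\!]\langle q\rangle$; $\mathcal V[\![MN]\!]=(p)(\nu q)\big(\mathcal V[\![M]\!]\langle q\rangle\mid q(y).(\nu r)(\mathcal V[\![N]\!]\langle r\rangle\mid r(w).\overline y\langle w,p\rangle)\big)$; $\mathcal V[\![x]\!]=(p)\,\overline p\langle x\rangle$. $\mathcal V'$ is defined by the same clauses for abstraction and application (with $\mathcal V'$ in place of $\mathcal V$), and $\mathcal V'[\![x]\!]=(p)\,\overline p(y).\,!y(z,q).\overline x\langle z,q\rangle$. *)

From Stdlib Require Import List Arith Relations.
Import ListNotations.

(* A name is a pair (sort, index): every sort has infinitely many names
   (Milner-style sorting: names are partitioned into sorts). *)
Definition name : Type := (nat * nat)%type.
Definition sort_of (a : name) : nat := fst a.

Definition name_eq_dec : forall a b : name, {a = b} + {a <> b}.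
Proof. decide equality; apply Nat.eq_dec. Defined.

Definition inb (a : name) (l : list name) : bool :=
  existsb (fun b => if name_eq_dec a b then true else false) l.

Inductive proc : Type :=
| PNil : proc
| PIn : name -> list name -> proc -> proc
| POut : name -> list name -> proc -> proc
| PNu : name -> proc -> proc
| PPar : proc -> proc -> proc
| PRep : name -> list name -> proc -> proc
| PApp : list name -> proc -> list name -> proc        (* ((x~)P)<b~> *)
| PConst : nat -> list name -> proc.

Definition abs : Type := (list name * proc)%type.

Definition const_env : Type := nat -> abs.

Fixpoint fn (P : proc) : list name :=
  match P with
  | PNil => []
  | PIn a xs Q => a :: filter (fun n => negb (inb n xs)) (fn Q)
  | POut a bs Q => a :: bs ++ fn Q
  | PNu x Q => remove name_eq_dec x (fn Q)
  | PPar Q R => fn Q ++ fn R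
  | PRep a xs Q => a :: filter (fun n => negb (inb n xs)) (fn Q)
  | PApp xs Q bs => filter (fun n => negb (inb n xs)) (fn Q) ++ bs
  | PConst _ bs => bs
  end.

Definition maxidx_names (l : list name) : nat :=
  fold_right (fun a m => Nat.max (snd a) m) 0 l.

Fixpoint maxidx (P : proc) : nat :=
  match P with
  | PNil => 0
  | PIn a xs Q => Nat.max (maxidx_names (a :: xs)) (maxidx Q)
  | POut a bs Q => Nat.max (maxidx_names (a :: bs)) (maxidx Q)
  | PNu x Q => Nat.max (snd x) (maxidx Q)
  | PPar Q R => Nat.max (maxidx Q) (maxidx R)
  | PRep a xs Q => Nat.max (maxidx_names (a :: xs)) (maxidx Q)
  | PApp xs Q bs => Nat.max (maxidx_names (xs ++ bs)) (maxidx Q)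
  | PConst _ bs => maxidx_names bs
  end.

Definition nsubst : Type := list (name * name).

Fixpoint lookup (s : nsubst) (a : name) : name :=
  match s with
  | [] => a
  | (x, y) :: s' => if name_eq_dec x a then y else lookup s' a
  end.

Definition maxidx_sub (s : nsubst) : nat :=
  fold_right (fun p m => Nat.max (Nat.max (snd (fst p)) (snd (snd p))) m) 0 s.

Fixpoint freshen (xs : list name) (f : nat) : list name :=
  match xs with
  | [] => []
  | x :: xs' => (fst x, f) :: freshen xs' (S f)
  end.

(* Capture-avoiding simultaneous substitution: every bound name is renamed
   to a fresh name (of the same sort). *)
Fixpoint subst (s : nsubst) (P : proc) : proc :=
  let f := S (Nat.max (maxidx P) (maxidx_sub s)) in
  match P with
  | PNil => PNil
  | PIn a xs Q =>
      let ys := freshen xs f in PIn (lookup s a) ys (subst (combine xs ys ++ s) Q)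
  | POut a bs Q => POut (lookup s a) (map (lookup s) bs) (subst s Q)
  | PNu x Q => let y := (fst x, f) in PNu y (subst ((x, y) :: s) Q)
  | PPar Q R => PPar (subst s Q) (subst s R)
  | PRep a xs Q =>
      let ys := freshen xs f in PRep (lookup s a) ys (subst (combine xs ys ++ s) Q)
  | PApp xs Q bs =>
      let ys := freshen xs f in
      PApp ys (subst (combine xs ys ++ s) Q) (map (lookup s) bs)
  | PConst k bs => PConst k (map (lookup s) bs)
  end.

Inductive sc (defs : const_env) : proc -> proc -> Prop :=
| sc_refl P : sc defs P P
| sc_sym P Q : sc defs P Q -> sc defs Q P
| sc_trans P Q R : sc defs P Q -> sc defs Q R -> sc defs P R
| sc_in a xs P P' : sc defs P P' -> sc defs (PIn a xs P) (PIn a xs P')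
| sc_out a bs P P' : sc defs P P' -> sc defs (POut a bs P) (POut a bs P')
| sc_nu x P P' : sc defs P P' -> sc defs (PNu x P) (PNu x P')
| sc_par_l P P' Q : sc defs P P' -> sc defs (PPar P Q) (PPar P' Q)
| sc_par_r P Q Q' : sc defs Q Q' -> sc defs (PPar P Q) (PPar P Q')
| sc_rep a xs P P' : sc defs P P' -> sc defs (PRep a xs P) (PRep a xs P')
| sc_app xs P P' bs : sc defs P P' -> sc defs (PApp xs P bs) (PApp xs P' bs)
| sc_alpha_nu x y P :
    sort_of y = sort_of x -> ~ In y (fn (PNu x P)) ->
    sc defs (PNu x P) (PNu y (subst [(x, y)] P))
| sc_alpha_in a xs ys P :
    NoDup ys -> map sort_of ys = map sort_of xs ->
    (forall y, In y ys -> ~ In y (fn (PIn a xs P))) ->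
    sc defs (PIn a xs P) (PIn a ys (subst (combine xs ys) P))
| sc_alpha_rep a xs ys P :
    NoDup ys -> map sort_of ys = map sort_of xs ->
    (forall y, In y ys -> ~ In y (fn (PRep a xs P))) ->
    sc defs (PRep a xs P) (PRep a ys (subst (combine xs ys) P))
| sc_alpha_app xs ys P bs :
    NoDup ys -> map sort_of ys = map sort_of xs ->
    (forall y, In y ys -> ~ In y (fn (PApp xs P []))) ->
    sc defs (PApp xs P bs) (PApp ys (subst (combine xs ys) P) bs)
| sc_par_nil P : sc defs (PPar P PNil) P
| sc_par_comm P Q : sc defs (PPar P Q) (PPar Q P)
| sc_par_assoc P Q R : sc defs (PPar (PPar P Q) R) (PPar P (PPar Q R))
| sc_nu_nil x : sc defs (PNu x PNil) PNil
| sc_nu_swap x y P : sc defs (PNu x (PNu y P)) (PNu y (PNu x P))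
| sc_nu_par x P Q : ~ In x (fn P) -> sc defs (PNu x (PPar P Q)) (PPar P (PNu x Q))
| sc_rep_unfold a xs P : sc defs (PRep a xs P) (PPar (PIn a xs P) (PRep a xs P))
| sc_beta xs P bs :
    length xs = length bs -> sc defs (PApp xs P bs) (subst (combine xs bs) P)
| sc_const k bs :
    length (fst (defs k)) = length bs ->
    sc defs (PConst k bs) (subst (combine (fst (defs k)) bs) (snd (defs k))).

Inductive red (defs : const_env) : proc -> proc -> Prop :=
| red_comm a xs bs P Q :
    length xs = length bs ->
    red defs (PPar (PIn a xs P) (POut a bs Q)) (PPar (subst (combine xs bs) P) Q)
| red_par P P' Q : red defs P P' -> red defs (PPar P Q) (PPar P' Q)
| red_nu x P P' : red defs P P' -> red defs (PNu x P) (PNu x P')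
| red_struct P P' Q Q' :
    sc defs P P' -> red defs P' Q' -> sc defs Q' Q -> red defs P Q.

Definition wred (defs : const_env) : relation proc := clos_refl_trans proc (red defs).

Fixpoint nus (xs : list name) (P : proc) : proc :=
  match xs with [] => P | x :: xs' => PNu x (nus xs' P) end.

Definition barb (defs : const_env) (P : proc) (a : name) : Prop :=
  exists xs bs Q R, sc defs P (nus xs (PPar (POut a bs Q) R)) /\ ~ In a xs.

Definition wbarb (defs : const_env) (P : proc) (a : name) : Prop :=
  exists P', wred defs P P' /\ barb defs P' a.

Definition is_barbed_bisim (defs : const_env) (Rel : proc -> proc -> Prop) : Prop :=
  (forall P Q, Rel P Q -> Rel Q P) /\
  (forall P Q, Rel P Q ->
     (forall P', wred defs P P' -> exists Q', wred defs Q Q' /\ Rel P' Q') /\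
     (forall a, wbarb defs P a <-> wbarb defs Q a)).

Definition barbed_bisimilar (defs : const_env) (P Q : proc) : Prop :=
  exists Rel, is_barbed_bisim defs Rel /\ Rel P Q.

(* A sorting ob assigns to each sort the list of sorts of the objects
   carried by names of that sort. *)
Fixpoint well_sorted (ob : nat -> list nat) (defs : const_env) (P : proc) : Prop :=
  match P with
  | PNil => True
  | PIn a xs Q => NoDup xs /\ map sort_of xs = ob (sort_of a) /\ well_sorted ob defs Q
  | POut a bs Q => map sort_of bs = ob (sort_of a) /\ well_sorted ob defs Q
  | PNu _ Q => well_sorted ob defs Q
  | PPar Q R => well_sorted ob defs Q /\ well_sorted ob defs R
  | PRep a xs Q => NoDup xs /\ map sort_of xs = ob (sort_of a) /\ well_sorted ob defs Q
  | PApp xs Q bs => NoDup xs /\ map sort_of xs = map sort_of bs /\ well_sorted ob defs Q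
  | PConst k bs => map sort_of (fst (defs k)) = map sort_of bs
  end.

Definition defs_ok (ob : nat -> list nat) (defs : const_env) : Prop :=
  forall k, NoDup (fst (defs k)) /\ well_sorted ob defs (snd (defs k)) /\
            (forall n, In n (fn (snd (defs k))) -> In n (fst (defs k))).

(* one-hole contexts; the hole [.]<b~> is filled with an abstraction *)
Inductive ctx : Type :=
| CHole : list name -> ctx
| CIn : name -> list name -> ctx -> ctx
| COut : name -> list name -> ctx -> ctx
| CNu : name -> ctx -> ctx
| CParL : ctx -> proc -> ctx
| CParR : proc -> ctx -> ctx
| CRep : name -> list name -> ctx -> ctx
| CApp : list name -> ctx -> list name -> ctx.

(* filling is textual (may capture names) *)
Fixpoint fill (C : ctx) (F : abs) : proc :=
  match C with
  | CHole bs => PApp (fst F) (snd F) bs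
  | CIn a xs C' => PIn a xs (fill C' F)
  | COut a bs C' => POut a bs (fill C' F)
  | CNu x C' => PNu x (fill C' F)
  | CParL C' Q => PPar (fill C' F) Q
  | CParR Q C' => PPar Q (fill C' F)
  | CRep a xs C' => PRep a xs (fill C' F)
  | CApp xs C' bs => PApp xs (fill C' F) bs
  end.

Definition barbed_congruent (ob : nat -> list nat) (defs : const_env) (A B : abs) : Prop :=
  forall C : ctx,
    well_sorted ob defs (fill C A) -> well_sorted ob defs (fill C B) ->
    barbed_bisimilar defs (fill C A) (fill C B).

Inductive term : Type :=
| Var : nat -> term
| Lam : nat -> term -> term
| App : term -> term -> term.

Definition is_value (M : term) : Prop :=
  match M with App _ _ => False | _ => True end.

Fixpoint maxvar (M : term) : nat :=
  match M with
  | Var x => x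
  | Lam x M' => Nat.max x (maxvar M')
  | App M1 M2 => Nat.max (maxvar M1) (maxvar M2)
  end.

(* sorts: value names (lambda-variables, y, w, z) and location names (p, q, r) *)
Definition sV : nat := 0.
Definition sL : nat := 1.
Definition vname (x : nat) : name := (sV, x).

Definition Iterm : term := Lam 0 (Var 0).

Fixpoint encV (M : term) (p : name) : proc :=
  match M with
  | Var x => POut p [vname x] PNil
  | Lam x M' =>
      let y := vname (S (maxvar M)) in
      let q := (sL, S (snd p)) in
      PNu y (POut p [y] (PRep y [vname x; q] (encV M' q)))
  | App M1 M2 =>
      let q := (sL, S (snd p)) in
      let r := (sL, S (S (snd p))) in
      let y := vname (S (maxvar M)) in
      let w := vname (S (S (maxvar M))) in
      PNu q (PPar (encV M1 q)
                  (PIn q [y] (PNu r (PPar (encV M2 r)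
                                          (PIn r [w] (POut y [w; p] PNil))))))
  end.

Fixpoint encV' (M : term) (p : name) : proc :=
  match M with
  | Var x =>
      let y := vname (S x) in
      let z := vname (S (S x)) in
      let q := (sL, S (snd p)) in
      PNu y (POut p [y] (PRep y [z; q] (POut (vname x) [z; q] PNil)))
  | Lam x M' =>
      let y := vname (S (maxvar M)) in
      let q := (sL, S (snd p)) in
      PNu y (POut p [y] (PRep y [vname x; q] (encV' M' q)))
  | App M1 M2 =>
      let q := (sL, S (snd p)) in
      let r := (sL, S (S (snd p))) in
      let y := vname (S (maxvar M)) in
      let w := vname (S (S (maxvar M))) in
      PNu q (PPar (encV' M1 q)
                  (PIn q [y] (PNu r (PPar (encV' M2 r)
                                          (PIn r [w] (POut y [w; p] PNil))))))
  end.

Definition p0 : name := (sL, 0).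
Definition encVabs (M : term) : abs := ([p0], encV M p0).
Definition encV'abs (M : term) : abs := ([p0], encV' M p0).

(* Put each encoding, at location [p0], in parallel with the probe
     x(z, q). q(_). o<o, p0>  |  p0<o>.
   Run on [xV], the application passes its argument and its continuation [p0]
   along [x]; the probe then reads [o] from [p0] and fires [o].  In [I(xV)] the
   inner application [xV] is handed a private continuation [r] on which nothing
   is ever sent, so the probe blocks.  To prove this, type names so that type 0
   marks names that are never output subjects; typability is preserved by
   structural congruence and reduction.  Giving the second object of [x] type 0
   makes the probe's continuation [q(_). o<o, p0>] dead code, so [o] gets type 0
   and is never observable. *)

From Stdlib Require Import List Arith Lia Relations Permutation Setoid.
Import ListNotations.

Lemma inb_In a l : inb a l = true <-> In a l.
Proof.
  unfold inb. rewrite existsb_exists. split.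
  - intros [b [Hb He]]. destruct (name_eq_dec a b); [subst; auto | discriminate].
  - intros H. exists a. split; auto. destruct (name_eq_dec a a); congruence.
Qed.

Lemma In_filter_notinb n xs l :
  In n (filter (fun n => negb (inb n xs)) l) <-> In n l /\ ~ In n xs.
Proof.
  rewrite filter_In, <- (inb_In n xs). destruct (inb n xs); simpl; intuition congruence.
Qed.

Lemma In_remove_iff x n l : In n (remove name_eq_dec x l) <-> In n l /\ n <> x.
Proof. split; [apply in_remove | intros [? ?]; apply in_in_remove; auto]. Qed.

Lemma maxidx_names_In n l : In n l -> snd n <= maxidx_names l.
Proof. induction l as [|a l IH]; simpl; [tauto|]. intros [<-|H]; [|specialize (IH H)]; lia. Qed.

Lemma maxidx_names_app l1 l2 :
  maxidx_names (l1 ++ l2) = Nat.max (maxidx_names l1) (maxidx_names l2).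
Proof. induction l1; simpl; [|rewrite IHl1]; lia. Qed.

Lemma fn_maxidx P n : In n (fn P) -> snd n <= maxidx P.
Proof.
  induction P; simpl; intros H; try tauto;
    repeat match goal with
    | H : _ \/ _ |- _ => destruct H as [<-|H]; [lia|]
    | H : In _ (_ ++ _) |- _ => apply in_app_or in H as [H|H]
    | H : In _ (filter _ _) |- _ => apply In_filter_notinb in H as [H _]
    | H : In _ (remove _ _ _) |- _ => apply In_remove_iff in H as [H _]
    end;
    rewrite ?maxidx_names_app;
    solve [ specialize (IHP H); lia | specialize (IHP1 H); lia | specialize (IHP2 H); lia
          | pose proof (maxidx_names_In _ _ H); lia ].
Qed.

Lemma fresh_notin_fn P n : maxidx P < snd n -> ~ In n (fn P).
Proof. intros H C. apply fn_maxidx in C. lia. Qed.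

Lemma lookup_le s n : snd (lookup s n) <= Nat.max (snd n) (maxidx_sub s).
Proof.
  induction s as [|[a b] s IH]; simpl; [lia|].
  destruct (name_eq_dec a n); lia.
Qed.

Lemma lookup_app_notin l1 l2 n :
  ~ In n (map fst l1) -> lookup (l1 ++ l2) n = lookup l2 n.
Proof.
  induction l1 as [|[a b] l1 IH]; simpl; auto. intros H.
  destruct (name_eq_dec a n); [subst; tauto|]. apply IH; tauto.
Qed.

Lemma lookup_app_In l1 l2 n : In n (map fst l1) -> lookup (l1 ++ l2) n = lookup l1 n.
Proof.
  induction l1 as [|[a b] l1 IH]; simpl; [tauto|]. intros H.
  destruct (name_eq_dec a n); auto. apply IH. destruct H; [congruence|auto].
Qed.

Lemma map_fst_combine {A B : Type} (xs : list A) (ys : list B) :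
  length xs = length ys -> map fst (combine xs ys) = xs.
Proof.
  revert ys; induction xs; intros [|y ys]; simpl; intros; try discriminate; auto.
  f_equal; auto.
Qed.

Lemma lookup_combine_notin xs ys n : ~ In n xs -> lookup (combine xs ys) n = n.
Proof.
  revert ys; induction xs; intros [|y ys]; simpl; auto. intros H.
  destruct (name_eq_dec a n); [subst; tauto|]. apply IHxs; tauto.
Qed.

Lemma lookup_combine_In xs ys n :
  length xs = length ys -> In n xs -> In (lookup (combine xs ys) n) ys.
Proof.
  revert ys; induction xs; intros [|y ys]; simpl; intros; try discriminate; try tauto.
  destruct (name_eq_dec a n); auto. right. apply IHxs; auto. destruct H0; congruence.
Qed.

Lemma freshen_length xs f : length (freshen xs f) = length xs.
Proof. revert f; induction xs; simpl; auto. Qed.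

Lemma freshen_ge xs f y : In y (freshen xs f) -> f <= snd y.
Proof.
  revert f; induction xs; simpl; [tauto|].
  intros f [<-|H]; [simpl; lia|]. specialize (IHxs _ H); lia.
Qed.

Lemma freshen_NoDup xs f : NoDup (freshen xs f).
Proof.
  revert f; induction xs; simpl; intros; constructor; auto.
  intros H. apply freshen_ge in H. simpl in H. lia.
Qed.

Lemma map_sort_length (xs ys : list name) :
  map sort_of ys = map sort_of xs -> length xs = length ys.
Proof. intros H. rewrite <- (length_map sort_of xs), <- (length_map sort_of ys). congruence. Qed.

Fixpoint extend (G : name -> nat) (xs : list name) (ts : list nat) (n : name) : nat :=
  match xs with
  | [] => G n
  | x :: xs' => if name_eq_dec x n then hd 0 ts else extend G xs' (tl ts) n
  end.

Lemma extend_notin G xs ts n : ~ In n xs -> extend G xs ts n = G n.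
Proof.
  revert ts; induction xs; simpl; intros; auto.
  destruct (name_eq_dec a n); [subst; tauto|]. apply IHxs; tauto.
Qed.

Lemma extend_In G G' xs ts n : In n xs -> extend G xs ts n = extend G' xs ts n.
Proof.
  revert ts; induction xs; simpl; intros ts H; [tauto|].
  destruct (name_eq_dec a n); auto. apply IHxs. destruct H; congruence.
Qed.

Lemma extend_agree (l : list name) G G' xs ts :
  (forall n, In n l -> ~ In n xs -> G n = G' n) ->
  forall n, In n l -> extend G xs ts n = extend G' xs ts n.
Proof.
  intros H n Hn. destruct (In_dec name_eq_dec n xs).
  - apply extend_In; auto.
  - rewrite !extend_notin; auto.
Qed.

Lemma extend_combine G G' xs ys ts n :
  NoDup ys -> length xs = length ys -> In n xs ->
  extend G' ys ts (lookup (combine xs ys) n) = extend G xs ts n.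
Proof.
  revert ys ts; induction xs as [|x xs IH]; intros [|y ys] ts Hnd Hl Hin;
    simpl in *; try tauto; try discriminate.
  destruct (name_eq_dec x n).
  - simpl. destruct (name_eq_dec y y); congruence.
  - inversion Hnd; subst. destruct Hin as [Hin|Hin]; [congruence|].
    assert (Hm := lookup_combine_In xs ys n ltac:(lia) Hin).
    destruct (name_eq_dec y (lookup (combine xs ys) n)); [subst; congruence|].
    apply IH; auto.
Qed.

Lemma extend_map G0 G xs bs n :
  length xs = length bs -> In n xs ->
  extend G0 xs (map G bs) n = G (lookup (combine xs bs) n).
Proof.
  revert bs; induction xs as [|x xs IH]; intros [|b bs] Hl Hin;
    simpl in *; try tauto; try discriminate.
  destruct (name_eq_dec x n); auto. apply IH; [lia|]. destruct Hin; congruence.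
Qed.

Lemma extend_subst_binder xs Q s G G' ts f :
  maxidx Q < f -> maxidx_sub s < f ->
  (forall n, In n (fn Q) -> ~ In n xs -> G' (lookup s n) = G n) ->
  forall n, In n (fn Q) ->
  extend G' (freshen xs f) ts (lookup (combine xs (freshen xs f) ++ s) n) = extend G xs ts n.
Proof.
  intros HQ Hs H n Hn. destruct (In_dec name_eq_dec n xs) as [Hin|Hin].
  - rewrite lookup_app_In by (rewrite map_fst_combine; rewrite ?freshen_length; auto).
    apply extend_combine; auto using freshen_NoDup. rewrite freshen_length; auto.
  - rewrite lookup_app_notin by (rewrite map_fst_combine; rewrite ?freshen_length; auto).
    rewrite (extend_notin G), extend_notin; auto.
    intros C. apply freshen_ge in C.
    pose proof (lookup_le s n). pose proof (fn_maxidx _ _ Hn). lia.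
Qed.

Section Typing.

Variable tbl : nat -> list nat.
Variable defs : const_env.

(* A type is a number [t], and [tbl t] lists the types of the objects carried
   by names of type [t].  Type 0 is inert: a name of type 0 is never used as
   an output subject, so inputs on it can never fire and are not checked.
   Constant bodies are name-closed, so only their parameters are typed. *)
Inductive typed : (name -> nat) -> proc -> Prop :=
| typed_nil G : typed G PNil
| typed_in_inert G a xs P : G a = 0 -> typed G (PIn a xs P)
| typed_in G a xs P : typed (extend G xs (tbl (G a))) P -> typed G (PIn a xs P)
| typed_out G a bs P :
    G a <> 0 -> map G bs = tbl (G a) -> typed G P -> typed G (POut a bs P)
| typed_nu G x P t : typed (extend G [x] [t]) P -> typed G (PNu x P)
| typed_par G P Q : typed G P -> typed G Q -> typed G (PPar P Q)
| typed_rep_inert G a xs P : G a = 0 -> typed G (PRep a xs P)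
| typed_rep G a xs P : typed (extend G xs (tbl (G a))) P -> typed G (PRep a xs P)
| typed_app G xs P bs : typed (extend G xs (map G bs)) P -> typed G (PApp xs P bs)
| typed_const G k bs :
    typed (extend (fun _ => 0) (fst (defs k)) (map G bs)) (snd (defs k)) ->
    typed G (PConst k bs).

Lemma typed_in_iff G a xs P :
  typed G (PIn a xs P) <-> G a = 0 \/ typed (extend G xs (tbl (G a))) P.
Proof.
  split; [inversion 1; auto|intros [H|H]; [apply typed_in_inert|apply typed_in]; auto].
Qed.

Lemma typed_out_iff G a bs P :
  typed G (POut a bs P) <-> G a <> 0 /\ map G bs = tbl (G a) /\ typed G P.
Proof. split; [inversion 1; auto|intros (? & ? & ?); apply typed_out; auto]. Qed.

Lemma typed_nu_iff G x P : typed G (PNu x P) <-> exists t, typed (extend G [x] [t]) P.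
Proof. split; [inversion 1; eauto|intros [t H]; eapply typed_nu; eauto]. Qed.

Lemma typed_par_iff G P Q : typed G (PPar P Q) <-> typed G P /\ typed G Q.
Proof. split; [inversion 1; auto|intros [? ?]; apply typed_par; auto]. Qed.

Lemma typed_rep_iff G a xs P :
  typed G (PRep a xs P) <-> G a = 0 \/ typed (extend G xs (tbl (G a))) P.
Proof.
  split; [inversion 1; auto|intros [H|H]; [apply typed_rep_inert|apply typed_rep]; auto].
Qed.

Lemma typed_app_iff G xs P bs :
  typed G (PApp xs P bs) <-> typed (extend G xs (map G bs)) P.
Proof. split; [inversion 1; auto|apply typed_app]. Qed.

Lemma typed_const_iff G k bs :
  typed G (PConst k bs) <->
  typed (extend (fun _ => 0) (fst (defs k)) (map G bs)) (snd (defs k)).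
Proof. split; [inversion 1; auto|apply typed_const]. Qed.

Lemma typed_agree G G' P :
  typed G P -> (forall n, In n (fn P) -> G n = G' n) -> typed G' P.
Proof.
  intros HT; revert G'; induction HT; intros G' HG; simpl in HG.
  - constructor.
  - apply typed_in_inert. rewrite <- HG; auto.
  - apply typed_in. rewrite <- (HG a) by auto. apply IHHT.
    apply extend_agree. intros n Hn Hx. apply HG. right. apply In_filter_notinb; auto.
  - rewrite (HG a) in * by auto. apply typed_out; auto.
    + rewrite <- H0. apply map_ext_in. intros. symmetry; apply HG; right; apply in_or_app; auto.
    + apply IHHT. intros; apply HG; right; apply in_or_app; auto.
  - apply (typed_nu _ _ _ t). apply IHHT. apply extend_agree. intros n Hn Hx. apply HG.
    apply In_remove_iff. split; auto. intros ->; apply Hx; simpl; auto.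
  - constructor; [apply IHHT1|apply IHHT2]; intros; apply HG; apply in_or_app; auto.
  - apply typed_rep_inert. rewrite <- HG; auto.
  - apply typed_rep. rewrite <- (HG a) by auto. apply IHHT.
    apply extend_agree. intros n Hn Hx. apply HG. right. apply In_filter_notinb; auto.
  - apply typed_app. replace (map G' bs) with (map G bs).
    2:{ apply map_ext_in. intros; apply HG; apply in_or_app; auto. }
    apply IHHT. apply extend_agree. intros n Hn Hx. apply HG.
    apply in_or_app; left. apply In_filter_notinb; auto.
  - apply typed_const. replace (map G' bs) with (map G bs); auto.
    apply map_ext_in. intros; apply HG; auto.
Qed.

Lemma typed_subst P : forall s G G',
  (forall n, In n (fn P) -> G' (lookup s n) = G n) ->
  typed G P <-> typed G' (subst s P).
Proof.
  induction P as [|a l Q IH|a l Q IH|a Q IH|P IHP Q IHQ|a l Q IH|l Q IH bs|k bs];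
    intros s G G' HG; simpl in HG |- *;
    try set (f := S _);
    try assert (Hbinder : forall xs ts, (forall n, In n (fn Q) -> ~ In n xs -> G' (lookup s n) = G n) ->
               typed (extend G xs ts) Q <->
               typed (extend G' (freshen xs f) ts) (subst (combine xs (freshen xs f) ++ s) Q))
      by (intros; apply IH, extend_subst_binder; auto; unfold f; lia).
  - split; constructor.
  - rewrite !typed_in_iff, (HG a) by auto. rewrite Hbinder; [reflexivity|].
    intros n Hn Hx. apply HG. right. apply In_filter_notinb; auto.
  - rewrite !typed_out_iff, (HG a) by auto.
    rewrite map_map, (map_ext_in (fun n => G' (lookup s n)) G), <- (IH s G G'); [reflexivity| |];
      intros; apply HG; right; apply in_or_app; auto.
  - rewrite !typed_nu_iff. setoid_rewrite (Hbinder [a]); [reflexivity|].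
    intros n Hn Hx. apply HG. apply In_remove_iff. split; auto. intros ->; apply Hx; simpl; auto.
  - rewrite !typed_par_iff, (IHP s G G'), (IHQ s G G'); [reflexivity| |];
      intros; apply HG; apply in_or_app; auto.
  - rewrite !typed_rep_iff, (HG a) by auto. rewrite Hbinder; [reflexivity|].
    intros n Hn Hx. apply HG. right. apply In_filter_notinb; auto.
  - rewrite !typed_app_iff, map_map, (map_ext_in (fun n => G' (lookup s n)) G), Hbinder; [reflexivity| |].
    + intros n Hn Hx. apply HG. apply in_or_app; left. apply In_filter_notinb; auto.
    + intros; apply HG; apply in_or_app; auto.
  - rewrite !typed_const_iff, map_map, (map_ext_in (fun n => G' (lookup s n)) G); [reflexivity|]. auto.
Qed.

Lemma typed_rename G xs ys ts P :
  NoDup ys -> length xs = length ys ->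
  (forall y, In y ys -> ~ In y (filter (fun n => negb (inb n xs)) (fn P))) ->
  typed (extend G xs ts) P <-> typed (extend G ys ts) (subst (combine xs ys) P).
Proof.
  intros Hnd Hl Hys. apply typed_subst. intros n Hn. destruct (In_dec name_eq_dec n xs).
  - apply extend_combine; auto.
  - rewrite lookup_combine_notin, !extend_notin; auto.
    intros Hy. apply (Hys n Hy). apply In_filter_notinb; auto.
Qed.

Lemma typed_beta G0 G xs bs P : length xs = length bs ->
  (forall n, In n (fn P) -> ~ In n xs -> G0 n = G n) ->
  typed (extend G0 xs (map G bs)) P <-> typed G (subst (combine xs bs) P).
Proof.
  intros Hl HG0. apply typed_subst. intros n Hn. destruct (In_dec name_eq_dec n xs).
  - rewrite extend_map; auto.
  - rewrite lookup_combine_notin, extend_notin; auto. symmetry; auto.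
Qed.

Lemma typed_nu_swap G x y P : typed G (PNu x (PNu y P)) -> typed G (PNu y (PNu x P)).
Proof.
  rewrite !typed_nu_iff. intros [t Ht]. rewrite typed_nu_iff in Ht. destruct Ht as [u Hu].
  exists u. apply typed_nu_iff. exists (if name_eq_dec x y then u else t).
  eapply typed_agree; [exact Hu|]. intros n _. simpl.
  destruct (name_eq_dec y n), (name_eq_dec x n), (name_eq_dec x y); congruence.
Qed.

Lemma typed_nu_par G x P Q : ~ In x (fn P) ->
  typed G (PNu x (PPar P Q)) <-> typed G (PPar P (PNu x Q)).
Proof.
  intros Hx. rewrite typed_nu_iff, typed_par_iff, typed_nu_iff.
  assert (HP : forall t, typed (extend G [x] [t]) P <-> typed G P).
  { intros t. split; intros H; eapply typed_agree; eauto;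
      intros n Hn; simpl; destruct (name_eq_dec x n); congruence. }
  split.
  - intros [t Ht]. rewrite typed_par_iff, HP in Ht. split; [|exists t]; tauto.
  - intros [HP0 [t Ht]]. exists t. rewrite typed_par_iff, HP. auto.
Qed.

Hypothesis defs_closed : forall k n, In n (fn (snd (defs k))) -> In n (fst (defs k)).

Lemma typed_sc P Q : sc defs P Q -> forall G, typed G P <-> typed G Q.
Proof.
  induction 1; intros G;
    try (rewrite ?typed_in_iff, ?typed_out_iff, ?typed_nu_iff, ?typed_par_iff,
           ?typed_rep_iff, ?typed_app_iff;
         setoid_rewrite IHsc; reflexivity);
    try solve [rewrite !typed_par_iff; intuition (auto using typed_nil)].
  - reflexivity.
  - rewrite IHsc1; apply IHsc2.
  - rewrite !typed_nu_iff. setoid_rewrite (typed_rename _ [x] [y]); [reflexivity|..].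
    + repeat constructor; auto.
    + reflexivity.
    + intros y' [<-|[]] Hy. apply In_filter_notinb in Hy as [Hy Hyx].
      apply H0, In_remove_iff. split; auto. intros ->. apply Hyx. left; auto.
  - rewrite !typed_in_iff, (typed_rename _ xs ys); [reflexivity|auto|auto using map_sort_length|].
    intros y Hy Hy'. apply (H1 y Hy). right; auto.
  - rewrite !typed_rep_iff, (typed_rename _ xs ys); [reflexivity|auto|auto using map_sort_length|].
    intros y Hy Hy'. apply (H1 y Hy). right; auto.
  - rewrite !typed_app_iff, (typed_rename _ xs ys); [reflexivity|auto|auto using map_sort_length|].
    intros y Hy Hy'. apply (H1 y Hy). simpl. rewrite app_nil_r. auto.
  - rewrite typed_nu_iff. split; [constructor|exists 0; constructor].
  - split; apply typed_nu_swap.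
  - apply typed_nu_par; auto.
  - rewrite typed_par_iff, typed_rep_iff, typed_in_iff. tauto.
  - rewrite typed_app_iff. apply typed_beta; auto.
  - rewrite typed_const_iff. apply typed_beta; auto.
    intros n Hn Hnot. exfalso. apply Hnot, defs_closed, Hn.
Qed.

Lemma typed_red P Q : red defs P Q -> forall G, typed G P -> typed G Q.
Proof.
  induction 1; intros G HT.
  - rewrite typed_par_iff, typed_in_iff, typed_out_iff in HT.
    destruct HT as [[Ha|HP] (Ha' & Hbs & HQ)]; [congruence|].
    apply typed_par; auto. rewrite <- (typed_beta G G), Hbs; auto.
  - rewrite typed_par_iff in *. destruct HT; auto.
  - rewrite typed_nu_iff in *. destruct HT as [t HT]. eauto.
  - apply (typed_sc _ _ H1), IHred, (typed_sc _ _ H), HT.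
Qed.

Lemma typed_wred P Q G : wred defs P Q -> typed G P -> typed G Q.
Proof. induction 1; eauto using typed_red. Qed.

Lemma typed_output_subject G xs a bs Q R :
  typed G (nus xs (PPar (POut a bs Q) R)) -> ~ In a xs -> G a <> 0.
Proof.
  revert G; induction xs as [|x xs IH]; simpl; intros G HT Ha.
  - rewrite typed_par_iff, typed_out_iff in HT. tauto.
  - rewrite typed_nu_iff in HT. destruct HT as [t HT].
    apply IH in HT; [|tauto]. simpl in HT.
    destruct (name_eq_dec x a); [subst; tauto|auto].
Qed.

Lemma typed_not_wbarb G P a : typed G P -> G a = 0 -> ~ wbarb defs P a.
Proof.
  intros HT Ha [P' [Hw [xs [bs [Q [R [Hsc Hxs]]]]]]].
  apply (typed_wred _ _ G Hw), (typed_sc _ _ Hsc), typed_output_subject in HT; auto.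
Qed.

End Typing.

Lemma Permutation_nth_front {A : Type} (d : A) i l :
  i < length l -> Permutation l (nth i l d :: firstn i l ++ skipn (S i) l).
Proof.
  revert l; induction i; intros [|P l] H; simpl in *; try lia.
  - apply Permutation_refl.
  - eapply perm_trans; [apply perm_skip, IHi; lia|]. apply perm_swap.
Qed.

Section Traces.

Variable defs : const_env.

Fixpoint pars (l : list proc) : proc :=
  match l with [] => PNil | P :: l' => PPar P (pars l') end.

Lemma sc_pars_perm l l' : Permutation l l' -> sc defs (pars l) (pars l').
Proof.
  induction 1; simpl.
  - apply sc_refl.
  - apply sc_par_r; auto.
  - eapply sc_trans; [apply sc_sym, sc_par_assoc|].
    eapply sc_trans; [apply sc_par_l, sc_par_comm|apply sc_par_assoc].
  - eapply sc_trans; eauto.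
Qed.

Lemma sc_nus ns P Q : sc defs P Q -> sc defs (nus ns P) (nus ns Q).
Proof. induction ns; simpl; auto using sc_nu. Qed.

Lemma red_nus ns P Q : red defs P Q -> red defs (nus ns P) (nus ns Q).
Proof. induction ns; simpl; auto using red_nu. Qed.

Lemma nus_app ns y P : nus (ns ++ [y]) P = nus ns (PNu y P).
Proof. induction ns; simpl; congruence. Qed.

Lemma wbarb_sc P Q a : sc defs P Q -> wbarb defs Q a -> wbarb defs P a.
Proof.
  intros H [Q' [Hw Hb]]. apply clos_rt_rt1n in Hw. destruct Hw as [|Q1 Q' Hstep Hw].
  - exists P. split; [apply rt_refl|]. destruct Hb as (xs & bs & R & S & HS & Ha).
    exists xs, bs, R, S. split; eauto using sc_trans.
  - exists Q'. split; auto. eapply rt_trans; [apply rt_step|apply clos_rt1n_rt; eauto].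
    eapply red_struct; eauto using sc_refl.
Qed.

Lemma wbarb_red P Q a : red defs P Q -> wbarb defs Q a -> wbarb defs P a.
Proof. intros H [Q' [Hw Hb]]. exists Q'. split; auto. eapply rt_trans; [apply rt_step|]; eauto. Qed.

Lemma wbarb_pick ns l a i : i < length l ->
  wbarb defs (nus ns (pars (nth i l PNil :: firstn i l ++ skipn (S i) l))) a ->
  wbarb defs (nus ns (pars l)) a.
Proof. intros H. apply wbarb_sc, sc_nus, sc_pars_perm, Permutation_nth_front, H. Qed.

Lemma wbarb_par ns P Q l a :
  wbarb defs (nus ns (pars (P :: Q :: l))) a -> wbarb defs (nus ns (pars (PPar P Q :: l))) a.
Proof. apply wbarb_sc, sc_nus, sc_par_assoc. Qed.

Lemma wbarb_beta ns xs P bs l a : length xs = length bs ->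
  wbarb defs (nus ns (pars (subst (combine xs bs) P :: l))) a ->
  wbarb defs (nus ns (pars (PApp xs P bs :: l))) a.
Proof. intros H. apply wbarb_sc, sc_nus, sc_par_l, sc_beta, H. Qed.

Lemma wbarb_rep ns b xs P l a :
  wbarb defs (nus ns (pars (PIn b xs P :: PRep b xs P :: l))) a ->
  wbarb defs (nus ns (pars (PRep b xs P :: l))) a.
Proof.
  apply wbarb_sc, sc_nus. eapply sc_trans; [apply sc_par_l, sc_rep_unfold|apply sc_par_assoc].
Qed.

Lemma wbarb_comm ns b xs P bs Q l a : length xs = length bs ->
  wbarb defs (nus ns (pars (subst (combine xs bs) P :: Q :: l))) a ->
  wbarb defs (nus ns (pars (PIn b xs P :: POut b bs Q :: l))) a.
Proof.
  intros H. apply wbarb_red, red_nus. simpl.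
  eapply red_struct; [apply sc_sym, sc_par_assoc| |apply sc_par_assoc].
  apply red_par, red_comm, H.
Qed.

Lemma wbarb_extrude ns x P l a : ~ In x (fn (pars l)) ->
  wbarb defs (nus (ns ++ [x]) (pars (P :: l))) a ->
  wbarb defs (nus ns (pars (PNu x P :: l))) a.
Proof.
  intros H. rewrite nus_app. apply wbarb_sc, sc_nus. simpl.
  eapply sc_trans; [apply sc_par_comm|].
  eapply sc_trans; [apply sc_sym, sc_nu_par, H|apply sc_nu, sc_par_comm].
Qed.

Lemma wbarb_rename_extrude ns x P l a k : maxidx (pars (PNu x P :: l)) < k ->
  wbarb defs (nus (ns ++ [(fst x, k)]) (pars (subst [(x, (fst x, k))] P :: l))) a ->
  wbarb defs (nus ns (pars (PNu x P :: l))) a.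
Proof.
  intros Hk H. simpl in Hk.
  apply wbarb_sc with (nus ns (pars (PNu (fst x, k) (subst [(x, (fst x, k))] P) :: l))).
  - apply sc_nus, sc_par_l, sc_alpha_nu; [reflexivity|]. apply fresh_notin_fn. simpl. lia.
  - apply wbarb_extrude; auto. apply fresh_notin_fn. simpl. lia.
Qed.

Lemma wbarb_out ns b bs Q l : ~ In b ns -> wbarb defs (nus ns (pars (POut b bs Q :: l))) b.
Proof.
  intros H. exists (nus ns (pars (POut b bs Q :: l))). split; [apply rt_refl|].
  exists ns, bs, Q, (pars l). split; auto using sc_refl.
Qed.

End Traces.

Definition success (x : nat) : name := vname (S x).

Definition probe_recv (x : nat) : proc :=
  PIn (vname x) [vname 0; (sL, 1)]
      (PIn (sL, 1) [vname 0] (POut (success x) [success x; p0] PNil)).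

Definition probe_send (x : nat) : proc := POut p0 [success x] PNil.

Definition probe (x : nat) : proc := PPar (probe_recv x) (probe_send x).

Definition probe_ctx (x : nat) : ctx := CParL (CHole [p0]) (probe x).

Arguments name_eq_dec : simpl never.

Ltac decide_names :=
  repeat match goal with |- context [name_eq_dec ?a ?b] =>
    let E := fresh "E" in
    destruct (name_eq_dec a b) as [E|E];
    [try (exfalso; cbv [vname p0 sV sL] in E; injection E; intros; lia)
    |try (exfalso; apply E; reflexivity)];
    try clear E
  end.

(* Type 1 is that of [x], whose objects have types [k] and 0; type 3 is that
   of [p0] and of locations carrying inert names; types 2 and 4 are those of
   the locations carrying [x] and the argument of [x].  The continuation that
   [I(xV)] passes to [xV] gets type 0. *)
Definition probe_env (x : nat) (n : name) : nat :=
  if name_eq_dec n (vname x) then 1 else if name_eq_dec n p0 then 3 else 0.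

Definition probe_tbl (k t : nat) : list nat :=
  match t with 1 => [k; 0] | 2 => [1] | 3 => [0] | 4 => [k] | _ => [] end.

Ltac typecheck_side := simpl; unfold probe_env; decide_names.

Ltac typecheck_step :=
  simpl;
  match goal with
  | |- typed _ _ _ PNil => apply typed_nil
  | |- typed _ _ _ (PPar _ _) => apply typed_par
  | |- typed _ _ _ (PApp _ _ _) => apply typed_app
  | |- typed _ _ _ (POut _ _ _) =>
      apply typed_out; [typecheck_side; discriminate|typecheck_side; reflexivity|]
  | |- typed _ _ _ (PIn _ _ _) =>
      first [apply typed_in_inert; typecheck_side; reflexivity | apply typed_in]
  | |- typed _ _ _ (PRep _ _ _) =>
      first [apply typed_rep_inert; typecheck_side; reflexivity | apply typed_rep]
  end.

Ltac typecheck := repeat typecheck_step.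

Lemma typed_probe defs x k : typed (probe_tbl k) defs (probe_env x) (probe x).
Proof. unfold probe, probe_recv, probe_send, success. typecheck. Qed.

Lemma typed_encV'_I_app defs x V : is_value V ->
  typed (probe_tbl 0) defs (probe_env x) (PApp [p0] (encV' (App Iterm (App (Var x) V)) p0) [p0]).
Proof.
  intros HV. typecheck. apply typed_nu with (t := 3). typecheck.
  - apply typed_nu with (t := 0). typecheck.
  - apply typed_nu with (t := 0). typecheck. apply typed_nu with (t := 2). typecheck.
    + apply typed_nu with (t := 1). typecheck.
    + apply typed_nu with (t := 4). typecheck.
      destruct V; try contradiction; apply typed_nu with (t := 0); typecheck.
Qed.

Definition arg_type (x : nat) (V : term) : nat :=
  match V with Var v => probe_env x (vname v) | _ => 0 end.

Lemma typed_encV_I_app defs x V : is_value V ->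
  typed (probe_tbl (arg_type x V)) defs (probe_env x)
        (PApp [p0] (encV (App Iterm (App (Var x) V)) p0) [p0]).
Proof.
  intros HV. typecheck. apply typed_nu with (t := 3). typecheck.
  - apply typed_nu with (t := 0). typecheck.
  - apply typed_nu with (t := 0). typecheck. apply typed_nu with (t := 2). typecheck.
    apply typed_nu with (t := 4). typecheck.
    destruct V; try contradiction; [|apply typed_nu with (t := 0)]; typecheck.
Qed.

Lemma probe_not_wbarb_of_typed defs k x A :
  (forall k n, In n (fn (snd (defs k))) -> In n (fst (defs k))) ->
  typed (probe_tbl k) defs (probe_env x) A -> ~ wbarb defs (PPar A (probe x)) (success x).
Proof.
  intros Hdefs HA. apply (typed_not_wbarb (probe_tbl k) _ Hdefs (probe_env x)).
  - apply typed_par; auto using typed_probe.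
  - typecheck_side. reflexivity.
Qed.

Arguments Nat.max : simpl never.
Arguments nus : simpl never.
Arguments pars : simpl never.

Ltac le_max :=
  first [ apply Nat.le_refl
        | apply Nat.max_le_iff; left; le_max
        | apply Nat.max_le_iff; right; le_max ].

Ltac assert_leaves_below k Hk e :=
  lazymatch e with
  | Nat.max ?a ?b => assert_leaves_below k Hk a; assert_leaves_below k Hk b
  | 0 => idtac
  | _ => lazymatch goal with
         | _ : e < k |- _ => idtac
         | _ => let L := fresh "L" in assert (L : e < k) by (rewrite Hk; apply le_n_S; le_max)
         end
  end.

(* [subst] renames binders to indices [S (Nat.max ...)] over all indices in
   sight; abstracting each such index into a variable bounding every leaf
   keeps the terms small and lets [lia] tell the names apart. *)
Ltac abstract_indices :=
  repeat match goal with |- context [(_, S (Nat.max ?a ?b))] =>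
    let k := fresh "k" in let Hk := fresh "Hk" in
    remember (S (Nat.max a b)) as k eqn:Hk;
    assert_leaves_below k Hk (Nat.max a b); clear Hk
  end.

Ltac simpl_names := simpl; decide_names; abstract_indices.

Ltac pick i := apply (wbarb_pick _ _ _ _ i); [simpl; lia|]; cbn [nth firstn skipn app].

Ltac comm := apply wbarb_comm; [reflexivity|]; simpl_names.

Ltac extrude :=
  match goal with |- wbarb _ (nus _ (pars ?l)) _ =>
    apply (wbarb_rename_extrude _ _ _ _ _ _ (S (maxidx (pars l)))); [lia|] end;
  match goal with |- context [S (maxidx ?P)] =>
    let k := fresh "k" in let Hk := fresh "Hk" in
    remember (S (maxidx P)) as k eqn:Hk; cbv [pars] in Hk; simpl in Hk;
    lazymatch type of Hk with _ = S ?e => assert_leaves_below k Hk e end; clear Hk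
  end;
  simpl_names.

Ltac observe :=
  apply wbarb_out; cbv [success vname sV sL]; simpl;
  intros C; repeat destruct C as [C|C]; try injection C; try lia; auto.

Lemma wbarb_probe_start defs x A a :
  wbarb defs (nus [] (pars [A; probe_recv x; probe_send x])) a ->
  wbarb defs (PPar A (probe x)) a.
Proof. apply wbarb_sc. apply sc_par_r, sc_par_r, sc_sym, sc_par_nil. Qed.

Lemma encV'_value_shape V r : is_value V ->
  exists y J, fst y = sV /\ encV' V r = PNu y (POut r [y] J).
Proof. destruct V; try contradiction; (eexists _, _; split; [|reflexivity]; reflexivity). Qed.

(* The trace: the location of [x] delivers [x]'s forwarder [y], the location
   of [V] delivers the argument [w], [y] forwards [w, p0] along [x] to the
   probe, which then reads [o] from [p0].  The encoding [V] has no forwarder. *)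
Lemma probe_wbarb_encV'_app defs x V : is_value V ->
  wbarb defs (PPar (PApp [p0] (encV' (App (Var x) V) p0) [p0]) (probe x)) (success x).
Proof.
  intros HV. destruct (encV'_value_shape V (sL, 2) HV) as ([sy iy] & J & Hy & HVe).
  simpl in Hy; subst sy.
  apply wbarb_probe_start, wbarb_beta; [reflexivity|].
  cbn [encV' maxvar p0 snd]. rewrite HVe. remember (Nat.max x (maxvar V)) as m eqn:Hm.
  assert (Hxm : x <= m) by (subst m; apply Nat.le_max_l). clear Hm HVe.
  unfold probe_recv, probe_send, success. simpl_names.
  extrude. apply wbarb_par. extrude.
  pick 1. comm. extrude. apply wbarb_par. extrude.
  pick 1. comm.
  pick 2. apply wbarb_rep. pick 2. pick 1. comm.
  pick 4. comm. pick 5. pick 1. comm.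
  observe.
Qed.

Lemma probe_wbarb_encV_app defs x V : is_value V ->
  wbarb defs (PPar (PApp [p0] (encV (App (Var x) V) p0) [p0]) (probe x)) (success x).
Proof.
  intros HV. apply wbarb_probe_start, wbarb_beta; [reflexivity|].
  destruct V as [v|v M|]; try contradiction.
  - cbn [encV maxvar p0 snd]. remember (Nat.max x v) as m eqn:Hm.
    assert (Hxm : x <= m) by (subst m; apply Nat.le_max_l).
    assert (Hvm : v <= m) by (subst m; apply Nat.le_max_r). clear Hm.
    unfold probe_recv, probe_send, success. simpl_names.
    extrude. apply wbarb_par.
    pick 1. comm. extrude. apply wbarb_par.
    pick 1. comm. pick 3. comm. pick 4. pick 1. comm.
    observe.
  - cbn [encV maxvar p0 snd]. remember (Nat.max x (Nat.max v (maxvar M))) as m eqn:Hm.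
    assert (Hxm : x <= m) by (subst m; apply Nat.le_max_l). clear Hm.
    unfold probe_recv, probe_send, success. simpl_names.
    extrude. apply wbarb_par.
    pick 1. comm. extrude. apply wbarb_par. extrude.
    pick 1. comm. pick 3. comm. pick 4. pick 1. comm.
    observe.
Qed.

Section Sorting.

Variable ob : nat -> list nat.
Variable defs : const_env.
Hypothesis ob_value : ob sV = [sV; sL].
Hypothesis ob_location : ob sL = [sV].

Ltac distinct_names :=
  repeat constructor; simpl; intros C; repeat destruct C as [C|C];
  try injection C; intros; unfold sL, sV in *; try lia; auto.

Lemma well_sorted_encV' M p : sort_of p = sL -> well_sorted ob defs (encV' M p).
Proof.
  revert p; induction M; intros p Hp; simpl; unfold sort_of in *; simpl;
    rewrite ?Hp, ?ob_value, ?ob_location; repeat split; auto; distinct_names.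
Qed.

Lemma well_sorted_encV M p : sort_of p = sL -> well_sorted ob defs (encV M p).
Proof.
  revert p; induction M; intros p Hp; simpl; unfold sort_of in *; simpl;
    rewrite ?Hp, ?ob_value, ?ob_location; repeat split; auto; distinct_names.
Qed.

Lemma well_sorted_probe_fill x P :
  well_sorted ob defs P -> well_sorted ob defs (fill (probe_ctx x) ([p0], P)).
Proof.
  intros HP. simpl. unfold sort_of; simpl. rewrite ?ob_value, ?ob_location.
  repeat split; auto; distinct_names.
Qed.

End Sorting.

Lemma not_barbed_congruent_of_wbarb ob defs A B C a :
  well_sorted ob defs (fill C A) -> well_sorted ob defs (fill C B) ->
  ~ wbarb defs (fill C A) a -> wbarb defs (fill C B) a -> ~ barbed_congruent ob defs A B.
Proof.
  intros HA HB NA YB Hc. destruct (Hc C HA HB) as (R & [_ Hb] & HR).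
  apply NA, (proj2 (Hb _ _ HR) a), YB.
Qed.

Theorem proposition3p1 :
  forall (ob : nat -> list nat) (defs : const_env),
    ob sV = [sV; sL] -> ob sL = [sV] -> defs_ok ob defs ->
    forall (V : term) (x : nat), is_value V ->
      ~ barbed_congruent ob defs (encV'abs (App Iterm (App (Var x) V)))
                                 (encV'abs (App (Var x) V)) /\
      ~ barbed_congruent ob defs (encVabs (App Iterm (App (Var x) V)))
                                 (encVabs (App (Var x) V)).
Proof.
  intros ob defs Hv Hl Hdefs V x HV.
  assert (Hclosed : forall k n, In n (fn (snd (defs k))) -> In n (fst (defs k)))
    by (intros k; apply Hdefs).
  split; apply (not_barbed_congruent_of_wbarb _ _ _ _ (probe_ctx x) (success x));
    try (apply well_sorted_probe_fill; auto using well_sorted_encV, well_sorted_encV').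
  - apply (probe_not_wbarb_of_typed _ 0); [exact Hclosed|apply typed_encV'_I_app, HV].
  - apply probe_wbarb_encV'_app, HV.
  - apply (probe_not_wbarb_of_typed _ (arg_type x V)); [exact Hclosed|apply typed_encV_I_app, HV].
  - apply probe_wbarb_encV_app, HV.
Qed.
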